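(* Let $s$ be a positive integer, $\alpha\in\mathbb{R}$, $\omega(t)=\alpha+t^s$, $0<R<1$, $m_0>0$, and let $$\varphi:\ \xi'=e^{i\omega(\xi\eta)}\xi\,(1+p(\xi,\eta)),\quad \eta'=e^{-i\omega(\xi\eta)}\eta\,(1+p(\xi,\eta))^{-1},$$ where $p$ is a power series starting with terms of order at least $2s+1$, converging on $\Delta_R$, with $\|p\|_R\le m_0$. For a positive integer $n$ put $$d_0=\min\Big\{\frac{R^{2s+1}}{2^{6s+6}m_0},\ \Big(\frac{1}{2n}\Big)^{1/(2s)},\ \frac{R}{16}\Big\}.$$ Then for every $1\le k\le n$ the iterate $\varphi^k$ is defined on $\Delta_{d_0}$ and maps $\Delta_{d_0}$ into $\Delta_{4d_0}$.
   Context: $\Delta_r=\{(\xi,\eta)\in\mathbb{C}^2:|\xi|<r,|\eta|<r\}$ and $\|p\|_R=\max_{|\xi|,|\eta|\le R}|p(\xi,\eta)|$. *)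

From Stdlib Require Import Reals.
From Coquelicot Require Import Coquelicot.
Open Scope R_scope.

Fixpoint Cpow (z : C) (n : nat) : C :=
  match n with O => 1%C | S m => (z * Cpow z m)%C end.

Definition cexp (z : C) : C :=
  (exp (Re z) * cos (Im z), exp (Re z) * sin (Im z)).

Definition in_bidisc (r : R) (z : C * C) : Prop :=
  Cmod (fst z) < r /\ Cmod (snd z) < r.

(* triangular partial sum  sum_{i+j <= N} c i j xi^i eta^j *)
Fixpoint psum2 (c : nat -> nat -> C) (N : nat) (x y : C) : C :=
  let row := fix row (i : nat) : C :=
      match i with
      | O => (c O N * Cpow y N)%C
      | S i' => (c i (N - i)%nat * Cpow x i * Cpow y (N - i) + row i')%C
      end in
  match N with
  | O => (c O O)%C
  | S N' => (psum2 c N' x y + row N)%C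
  end.

(* nonnegative partial sum  sum_{i+j <= N} |c i j| |xi|^i |eta|^j *)
Fixpoint abssum2 (c : nat -> nat -> C) (N : nat) (x y : C) : R :=
  let row := fix row (i : nat) : R :=
      match i with
      | O => Cmod (c O N) * Cmod y ^ N
      | S i' => Cmod (c i (N - i)%nat) * Cmod x ^ i * Cmod y ^ (N - i) + row i'
      end in
  match N with
  | O => Cmod (c O O)
  | S N' => abssum2 c N' x y + row N
  end.

(* p is (on Delta_r) the sum of the double power series with coefficients c,
   which converges (absolutely) at every point of Delta_r *)
Definition is_power_series_on (r : R) (c : nat -> nat -> C) (p : C * C -> C) : Prop :=
  forall z : C * C, in_bidisc r z ->
    (exists M : R, forall N : nat, abssum2 c N (fst z) (snd z) <= M) /\
    filterlim (fun N => psum2 c N (fst z) (snd z)) eventually (locally (p z)).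

Definition order_at_least (ord : nat) (c : nat -> nat -> C) : Prop :=
  forall i j : nat, (i + j < ord)%nat -> c i j = 0%C.

Definition omega (alpha : R) (s : nat) (t : C) : C := (RtoC alpha + Cpow t s)%C.

Definition phi (alpha : R) (s : nat) (p : C * C -> C) (z : C * C) : C * C :=
  let xi := fst z in let eta := snd z in
  let w := omega alpha s (xi * eta)%C in
  ((cexp (Ci * w) * xi * (1 + p z))%C,
   (cexp (- (Ci * w)) * eta * / (1 + p z))%C).

(* phi is defined at z: z lies in Delta_R (where p converges) and 1 + p z <> 0 *)
Definition phi_defined_at (Rad : R) (p : C * C -> C) (z : C * C) : Prop :=
  in_bidisc Rad z /\ (1 + p z)%C <> 0%C.

Definition d0 (s : nat) (Rad m0 : R) (n : nat) : R :=
  Rmin (Rmin (Rad ^ (2 * s + 1) / (2 ^ (6 * s + 6) * m0))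
             (Rpower (/ (2 * INR n)) (/ (2 * INR s))))
       (Rad / 16).

From Stdlib Require Import Reals Lra Lia.
From Coquelicot Require Import Coquelicot.
Open Scope R_scope.

(* Write p = sum_N p_N with p_N homogeneous of degree N. Cauchy's estimates, obtained from the
   discrete Cauchy formula (average over the K-th roots of unity, then let K -> oo), bound p_N by
   m0 on the closed bidisc of radius R/2. Since p_N = 0 for N <= 2s, on Delta_(4 d0) this gives
   |p| <= 2 m0 (8 d0 / R)^(2s+1) <= e/4, where e = d0^(2s). The map phi preserves the product
   xi eta, so along an orbit |Im omega(xi eta)| <= e, and each step multiplies |xi| and |eta| by
   at most exp(e) / (1 - e/4) <= exp(3e/2); as n e <= 1/2, n steps multiply them by at most
   exp(3/4) < 4. *)

Lemma Cpow_add (z : C) (a b : nat) : Cpow z (a + b) = (Cpow z a * Cpow z b)%C.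
Proof. induction a as [|a IH]; simpl; [ring | rewrite IH; ring]. Qed.

Lemma Cpow_mult_distr (x y : C) (n : nat) : Cpow (x * y) n = (Cpow x n * Cpow y n)%C.
Proof. induction n as [|n IH]; simpl; [ring | rewrite IH; ring]. Qed.

Lemma Cpow_mult (z : C) (a b : nat) : Cpow z (a * b) = Cpow (Cpow z a) b.
Proof.
  induction b as [|b IH]; simpl.
  - now rewrite Nat.mul_0_r.
  - rewrite Nat.mul_succ_r, Cpow_add, IH; simpl; ring.
Qed.

Lemma Cpow1 (n : nat) : Cpow 1 n = 1%C.
Proof. induction n as [|n IH]; simpl; [reflexivity | rewrite IH; ring]. Qed.

Lemma Cpow_RtoC (r : R) (n : nat) : Cpow (RtoC r) n = RtoC (r ^ n).
Proof.
  induction n as [|n IH]; simpl; [reflexivity|].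
  rewrite IH; apply injective_projections; simpl; ring.
Qed.

Lemma Cmod_Cpow (z : C) (n : nat) : Cmod (Cpow z n) = Cmod z ^ n.
Proof. induction n as [|n IH]; simpl; [apply Cmod_1 | rewrite Cmod_mult, IH; ring]. Qed.

Lemma Cmod_RtoC_nonneg (r : R) : 0 <= r -> Cmod (RtoC r) = r.
Proof. intros Hr; rewrite Cmod_R; apply Rabs_pos_eq, Hr. Qed.

Lemma RtoC_neq0 (r : R) : r <> 0 -> RtoC r <> 0%C.
Proof. intros Hr E; apply Hr; exact (f_equal fst E). Qed.

Lemma Cplus_1_neq0 (w : C) : Cmod w < 1 -> (1 + w)%C <> 0%C.
Proof.
  intros Hw E.
  assert (Hm : w = (- (1))%C) by (replace w with ((1 + w) - 1)%C by ring; rewrite E; ring).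
  rewrite Hm, Cmod_m1 in Hw; lra.
Qed.

Fixpoint csum (f : nat -> C) (n : nat) : C :=
  match n with O => 0%C | S m => (csum f m + f m)%C end.

Fixpoint rsum (f : nat -> R) (n : nat) : R :=
  match n with O => 0 | S m => rsum f m + f m end.

Lemma csum_ext (f g : nat -> C) (n : nat) :
  (forall k, (k < n)%nat -> f k = g k) -> csum f n = csum g n.
Proof.
  induction n as [|n IH]; intros H; simpl; [reflexivity|].
  rewrite IH, H; [reflexivity | lia | intros; apply H; lia].
Qed.

Lemma csum_plus (f g : nat -> C) (n : nat) :
  csum (fun k => f k + g k)%C n = (csum f n + csum g n)%C.
Proof. induction n as [|n IH]; simpl; [ring | rewrite IH; ring]. Qed.

Lemma csum_minus (f g : nat -> C) (n : nat) :
  csum (fun k => f k - g k)%C n = (csum f n - csum g n)%C.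
Proof. induction n as [|n IH]; simpl; [ring | rewrite IH; ring]. Qed.

Lemma csum_mult_l (a : C) (f : nat -> C) (n : nat) :
  csum (fun k => a * f k)%C n = (a * csum f n)%C.
Proof. induction n as [|n IH]; simpl; [ring | rewrite IH; ring]. Qed.

Lemma csum_switch (F : nat -> nat -> C) (n m : nat) :
  csum (fun u => csum (F u) m) n = csum (fun v => csum (fun u => F u v) n) m.
Proof.
  induction n as [|n IH]; simpl.
  - induction m as [|m IHm]; simpl; [reflexivity | rewrite <- IHm; ring].
  - rewrite IH, <- csum_plus; reflexivity.
Qed.

Lemma csum_kronecker (n L : nat) (v : C) :
  (n < L)%nat -> csum (fun k => if (k =? n)%nat then v else 0%C) L = v.
Proof.
  intros HnL.
  assert (Hbelow : forall M, (M <= n)%nat -> csum (fun k => if (k =? n)%nat then v else 0%C) M = 0%C).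
  { induction M as [|M IH]; intros HM; simpl; [reflexivity|].
    rewrite IH by lia; replace (M =? n)%nat with false by (symmetry; apply Nat.eqb_neq; lia); ring. }
  induction L as [|L IH]; [lia|]; simpl.
  destruct (Nat.eq_dec L n) as [->|Hne].
  - rewrite Hbelow, Nat.eqb_refl by lia; ring.
  - rewrite IH by lia; replace (L =? n)%nat with false by (symmetry; apply Nat.eqb_neq; lia); ring.
Qed.

Lemma Cmod_csum_le (f : nat -> C) (n : nat) : Cmod (csum f n) <= rsum (fun k => Cmod (f k)) n.
Proof.
  induction n as [|n IH]; simpl; [rewrite Cmod_0; lra|].
  eapply Rle_trans; [apply Cmod_triangle | lra].
Qed.

Lemma rsum_le (f g : nat -> R) (n : nat) :
  (forall k, (k < n)%nat -> f k <= g k) -> rsum f n <= rsum g n.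
Proof.
  induction n as [|n IH]; intros H; simpl; [lra|].
  apply Rplus_le_compat; [apply IH; intros; apply H |apply H]; lia.
Qed.

Lemma rsum_const (a : R) (n : nat) : rsum (fun _ => a) n = INR n * a.
Proof. induction n as [|n IH]; simpl rsum; [simpl; ring | rewrite IH, S_INR; ring]. Qed.

Lemma rsum_mult_l (a : R) (f : nat -> R) (n : nat) : rsum (fun k => a * f k) n = a * rsum f n.
Proof. induction n as [|n IH]; simpl; [ring | rewrite IH; ring]. Qed.

Lemma rsum_geometric_tail_le (q : R) (K L : nat) : 0 <= q < 1 ->
  rsum (fun N => if (K <=? N)%nat then q ^ N else 0) L <= q ^ K / (1 - q).
Proof.
  intros Hq.
  assert (Hrest : forall L, rsum (fun N => if (K <=? N)%nat then q ^ N else 0) L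
     + (if (K <=? L)%nat then q ^ L else q ^ K) / (1 - q) = q ^ K / (1 - q)).
  { induction L0 as [|L0 IH]; simpl rsum.
    - destruct (K <=? 0)%nat eqn:E; [apply Nat.leb_le in E; replace K with 0%nat by lia|]; lra.
    - destruct (K <=? L0)%nat eqn:E1, (K <=? S L0)%nat eqn:E2.
      + rewrite <- IH; simpl; field; lra.
      + apply Nat.leb_le in E1; apply Nat.leb_nle in E2; lia.
      + apply Nat.leb_nle in E1; apply Nat.leb_le in E2.
        replace K with (S L0) in * by lia; rewrite <- IH; lra.
      + lra. }
  specialize (Hrest L).
  assert (0 <= (if (K <=? L)%nat then q ^ L else q ^ K) / (1 - q)).
  { apply Rdiv_le_0_compat; [destruct (K <=? L)%nat; apply pow_le|]; lra. }
  lra.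
Qed.

Lemma Cmod_lim_le (u : nat -> C) (l v : C) (B : R) :
  filterlim u eventually (locally l) ->
  eventually (fun L => Cmod (u L - v) <= B) -> Cmod (l - v) <= B.
Proof.
  intros Hu Hev.
  assert (Hlim : filterlim (fun L => u L - v)%C eventually (locally (l - v)%C)).
  { apply (filterlim_comp_2 (G := locally l) (H := locally (- v)%C) u (fun _ => (- v)%C) Cplus);
      [exact Hu | apply filterlim_const | exact (filterlim_plus (V := C_NormedModule) l (- v)%C)]. }
  assert (Hclosed : closed (fun w : C_NormedModule => Cmod w <= B)).
  { apply (closed_comp (fun w : C_NormedModule => norm w) (fun x => x <= B));
      [intros; apply filterlim_norm | apply closed_le]. }
  exact (closed_filterlim_loc (F := eventually) _ _ _ Hlim Hev Hclosed).
Qed.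

Lemma filterlim_csum (F : nat -> nat -> C) (l : nat -> C) (K : nat) :
  (forall u, (u < K)%nat -> filterlim (F u) eventually (locally (l u))) ->
  filterlim (fun L => csum (fun u => F u L) K) eventually (locally (csum l K)).
Proof.
  induction K as [|K IH]; intros HF; simpl; [apply filterlim_const|].
  eapply filterlim_comp_2; [apply IH; intros u Hu; apply HF; lia | apply HF; lia |].
  apply (filterlim_plus (csum l K) (l K)).
Qed.

Lemma filterlim_Cmult_l (a : C) (f : nat -> C) (l : C) :
  filterlim f eventually (locally l) ->
  filterlim (fun L => a * f L)%C eventually (locally (a * l)%C).
Proof.
  intros Hf; eapply filterlim_comp; [exact Hf|].
  apply (filterlim_scal_r (K := C_AbsRing) (V := C_NormedModule)).
Qed.

(** * Homogeneous parts of a double power series *)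

(* The inner [row] fixpoints of [psum2] and [abssum2]. *)
Fixpoint psum2_row (c : nat -> nat -> C) (N : nat) (x y : C) (i : nat) : C :=
  match i with
  | O => (c O N * Cpow y N)%C
  | S i' => (c i (N - i)%nat * Cpow x i * Cpow y (N - i) + psum2_row c N x y i')%C
  end.

Fixpoint abssum2_row (c : nat -> nat -> C) (N : nat) (x y : C) (i : nat) : R :=
  match i with
  | O => Cmod (c O N) * Cmod y ^ N
  | S i' => Cmod (c i (N - i)%nat) * Cmod x ^ i * Cmod y ^ (N - i) + abssum2_row c N x y i'
  end.

Definition hpart (c : nat -> nat -> C) (N : nat) (x y : C) : C := psum2_row c N x y N.

Lemma psum2_S (c : nat -> nat -> C) (N : nat) (x y : C) :
  psum2 c (S N) x y = (psum2 c N x y + hpart c (S N) x y)%C.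
Proof.
  unfold psum2 at 1; fold psum2; unfold hpart; f_equal; simpl psum2_row; f_equal.
  match goal with |- ?F N = _ => assert (Hrow : forall i, F i = psum2_row c (S N) x y i) end.
  { induction i as [|i IH]; [reflexivity | simpl; rewrite <- IH; reflexivity]. }
  apply Hrow.
Qed.

Lemma abssum2_S (c : nat -> nat -> C) (N : nat) (x y : C) :
  abssum2 c (S N) x y = abssum2 c N x y + abssum2_row c (S N) x y (S N).
Proof.
  unfold abssum2 at 1; fold abssum2; f_equal; simpl abssum2_row; f_equal.
  match goal with |- ?F N = _ => assert (Hrow : forall i, F i = abssum2_row c (S N) x y i) end.
  { induction i as [|i IH]; [reflexivity | simpl; rewrite <- IH; reflexivity]. }
  apply Hrow.
Qed.

Lemma psum2_hpart (c : nat -> nat -> C) (N : nat) (x y : C) :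
  psum2 c N x y = csum (fun k => hpart c k x y) (S N).
Proof.
  induction N as [|N IH]; [unfold hpart; simpl; ring|].
  rewrite psum2_S, IH; reflexivity.
Qed.

Lemma abssum2_row_ge0 (c : nat -> nat -> C) (N : nat) (x y : C) (i : nat) :
  0 <= abssum2_row c N x y i.
Proof.
  pose proof (Cmod_ge_0 x); pose proof (Cmod_ge_0 y).
  induction i as [|i IH]; simpl abssum2_row.
  - apply Rmult_le_pos; [apply Cmod_ge_0 | apply pow_le; lra].
  - apply Rplus_le_le_0_compat; [|exact IH].
    repeat apply Rmult_le_pos; try apply pow_le; try apply Cmod_ge_0; lra.
Qed.

Lemma abssum2_ge0 (c : nat -> nat -> C) (N : nat) (x y : C) : 0 <= abssum2 c N x y.
Proof.
  induction N as [|N IH]; [apply Cmod_ge_0|].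
  rewrite abssum2_S; pose proof (abssum2_row_ge0 c (S N) x y (S N)); lra.
Qed.

Lemma Cmod_psum2_row_le (c : nat -> nat -> C) (N : nat) (x y : C) (i : nat) :
  Cmod (psum2_row c N x y i) <= abssum2_row c N x y i.
Proof.
  induction i as [|i IH]; simpl.
  - rewrite Cmod_mult, Cmod_Cpow; lra.
  - eapply Rle_trans; [apply Cmod_triangle|]; rewrite !Cmod_mult, !Cmod_Cpow; lra.
Qed.

Lemma Cmod_hpart_le_abssum2 (c : nat -> nat -> C) (N : nat) (x y : C) :
  Cmod (hpart c N x y) <= abssum2 c N x y.
Proof.
  destruct N as [|N]; [unfold hpart; simpl; rewrite Cmod_mult, Cmod_1; lra|].
  rewrite abssum2_S; pose proof (abssum2_ge0 c N x y).
  pose proof (Cmod_psum2_row_le c (S N) x y (S N)); unfold hpart; lra.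
Qed.

Lemma hpart_scale (c : nat -> nat -> C) (N : nat) (t x y : C) :
  hpart c N (t * x) (t * y) = (Cpow t N * hpart c N x y)%C.
Proof.
  assert (Hrow : forall i, (i <= N)%nat ->
            psum2_row c N (t * x) (t * y) i = (Cpow t N * psum2_row c N x y i)%C).
  { induction i as [|i IH]; intros Hi; simpl psum2_row.
    - rewrite Cpow_mult_distr; ring.
    - rewrite IH, !Cpow_mult_distr by lia.
      replace (Cpow t N) with (Cpow t (S i + (N - S i))) by (f_equal; lia).
      rewrite Cpow_add; simpl Cpow; ring. }
  apply Hrow; lia.
Qed.

Lemma hpart_low (c : nat -> nat -> C) (M N : nat) (x y : C) :
  order_at_least M c -> (N < M)%nat -> hpart c N x y = 0%C.
Proof.
  intros Hc HN.
  assert (Hrow : forall i, (i <= N)%nat -> psum2_row c N x y i = 0%C).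
  { induction i as [|i IH]; intros Hi; simpl psum2_row.
    - rewrite Hc by lia; ring.
    - rewrite IH, Hc by lia; ring. }
  apply Hrow; lia.
Qed.

(** * Roots of unity *)

Definition zeta (K : nat) : C := (cos (2 * PI / INR K), sin (2 * PI / INR K)).

Lemma Cpow_zeta (K m : nat) :
  Cpow (zeta K) m = (cos (INR m * (2 * PI / INR K)), sin (INR m * (2 * PI / INR K))).
Proof.
  induction m as [|m IH].
  - simpl; rewrite Rmult_0_l, cos_0, sin_0; reflexivity.
  - simpl Cpow; rewrite IH, S_INR; unfold zeta.
    set (a := 2 * PI / INR K).
    replace ((INR m + 1) * a) with (a + INR m * a) by ring.
    apply injective_projections; simpl; [rewrite cos_plus | rewrite sin_plus]; ring.
Qed.

Lemma Cmod_Cpow_zeta (K m : nat) : Cmod (Cpow (zeta K) m) = 1.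
Proof.
  rewrite Cpow_zeta; unfold Cmod; simpl.
  set (a := INR m * (2 * PI / INR K)).
  replace (cos a * (cos a * 1) + sin a * (sin a * 1)) with (Rsqr (sin a) + Rsqr (cos a))
    by (unfold Rsqr; ring).
  rewrite sin2_cos2; apply sqrt_1.
Qed.

Lemma Cpow_zeta_self (K : nat) : (1 <= K)%nat -> Cpow (zeta K) K = 1%C.
Proof.
  intros HK; rewrite Cpow_zeta.
  assert (0 < INR K) by (apply lt_0_INR; lia).
  replace (INR K * (2 * PI / INR K)) with (2 * PI) by (field; lra).
  rewrite cos_2PI, sin_2PI; reflexivity.
Qed.

Lemma Cpow_zeta_neq1 (K m : nat) :
  (1 <= K)%nat -> (0 < m < 2 * K)%nat -> m <> K -> Cpow (zeta K) m <> 1%C.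
Proof.
  intros HK Hm HmK E; rewrite Cpow_zeta in E; apply (f_equal fst) in E; simpl in E.
  assert (HK0 : 0 < INR K) by (apply lt_0_INR; lia).
  set (a := INR m * (2 * PI / INR K) / 2).
  assert (Ecos : cos (2 * a) = 1) by (unfold a; rewrite <- E; f_equal; field; lra).
  rewrite cos_2a_sin in Ecos.
  assert (Hsin : sin a = 0) by nra.
  set (x := INR m / INR K).
  assert (Ha : a = PI * x) by (unfold a, x; field; lra).
  assert (0 < x < 2).
  { assert (0 < INR m) by (apply lt_0_INR; lia).
    assert (INR m < INR (2 * K)) by (apply lt_INR; lia); rewrite mult_INR in *; simpl in *.
    unfold x; split; [apply Rdiv_lt_0_compat; lra|].
    apply Rmult_lt_reg_r with (INR K); [lra|]; unfold Rdiv; rewrite Rmult_assoc, Rinv_l; lra. }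
  assert (x <> 1).
  { unfold x; intros Ex; apply HmK, INR_eq.
    apply (f_equal (fun y => y * INR K)) in Ex; unfold Rdiv in Ex.
    rewrite Rmult_assoc, Rinv_l, Rmult_1_r, Rmult_1_l in Ex; lra. }
  pose proof PI_RGT_0.
  destruct (Rlt_or_le x 1).
  - assert (0 < sin a) by (apply sin_gt_0; rewrite Ha; nra); lra.
  - assert (sin a < 0) by (apply sin_lt_0; rewrite Ha; nra); lra.
Qed.

Lemma csum_Cpow_root (w : C) (K : nat) : Cpow w K = 1%C -> w <> 1%C -> csum (Cpow w) K = 0%C.
Proof.
  intros HwK Hw1.
  assert (Hgeom : forall L, ((w - 1) * csum (Cpow w) L = Cpow w L - 1)%C).
  { induction L as [|L IH]; simpl; [ring | rewrite Cmult_plus_distr_l, IH; ring]. }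
  assert (Hw0 : (w - 1)%C <> 0%C).
  { intros E; apply Hw1; replace w with ((w - 1) + 1)%C by ring; rewrite E; ring. }
  replace (csum (Cpow w) K) with (/ (w - 1) * ((w - 1) * csum (Cpow w) K))%C by (field; exact Hw0).
  rewrite Hgeom, HwK; ring.
Qed.

Definition root_sum (K m : nat) : C := csum (Cpow (Cpow (zeta K) m)) K.

Lemma root_sum_self (K : nat) : (1 <= K)%nat -> root_sum K K = RtoC (INR K).
Proof.
  intros HK; unfold root_sum; rewrite Cpow_zeta_self by exact HK.
  clear HK; induction K as [|K IH]; simpl csum; [reflexivity|].
  rewrite IH, Cpow1, S_INR; apply injective_projections; simpl; ring.
Qed.

Lemma root_sum_eq0 (K m : nat) :
  (1 <= K)%nat -> (0 < m < 2 * K)%nat -> m <> K -> root_sum K m = 0%C.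
Proof.
  intros HK Hm HmK; apply csum_Cpow_root; [|apply Cpow_zeta_neq1; assumption].
  rewrite <- Cpow_mult, Nat.mul_comm, Cpow_mult, Cpow_zeta_self by exact HK; apply Cpow1.
Qed.

Lemma Cmod_root_sum_le (K m : nat) : Cmod (root_sum K m) <= INR K.
Proof.
  unfold root_sum; eapply Rle_trans; [apply Cmod_csum_le|].
  rewrite <- (Rmult_1_r (INR K)), <- rsum_const; apply rsum_le; intros u _.
  rewrite <- Cpow_mult, Cmod_Cpow_zeta; lra.
Qed.

(** * Cauchy estimates *)

Section CauchyEstimate.

Variables (a : nat -> C) (f : C -> C) (r q B m : R).
Hypothesis r_gt0 : 0 < r.
Hypothesis q_bound : 0 <= q < 1.
Hypothesis a_dominated : forall N, Cmod (a N) * r ^ N <= B * q ^ N.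
Hypothesis f_lim : forall t, Cmod t = r ->
  filterlim (fun L => csum (fun N => a N * Cpow t N)%C (S L)) eventually (locally (f t)).
Hypothesis f_bound : forall t, Cmod t = r -> Cmod (f t) <= m.

Let node (K u : nat) : C := (RtoC r * Cpow (zeta K) u)%C.

(* Discrete Cauchy formula: averaging over the [K]-th roots of unity against the weights
   [zeta^((K - n) u)] keeps exactly the terms of degree [n] modulo [K]. *)
Let average (K n : nat) (g : C -> C) : C :=
  csum (fun u => Cpow (zeta K) ((K - n) * u) * g (node K u))%C K.

Lemma Cmod_node (K u : nat) : Cmod (node K u) = r.
Proof. unfold node; rewrite Cmod_mult, Cmod_Cpow_zeta, Cmod_RtoC_nonneg; lra. Qed.

Lemma average_partial_sum (K n L : nat) :
  average K n (fun t => csum (fun N => a N * Cpow t N)%C (S L))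
  = csum (fun N => a N * RtoC (r ^ N) * root_sum K (K - n + N))%C (S L).
Proof.
  unfold average.
  erewrite csum_ext by (intros u _; rewrite <- csum_mult_l; reflexivity).
  rewrite csum_switch.
  apply csum_ext; intros N _; unfold root_sum; rewrite <- csum_mult_l.
  apply csum_ext; intros u _; unfold node.
  rewrite Cpow_mult_distr, Cpow_RtoC, <- !Cpow_mult.
  replace ((K - n + N) * u)%nat with ((K - n) * u + u * N)%nat by lia.
  rewrite Cpow_add; ring.
Qed.

Lemma dominating_constant_ge0 : 0 <= B.
Proof. pose proof (a_dominated 0); pose proof (Cmod_ge_0 (a 0%nat)); simpl in *; lra. Qed.

Lemma average_partial_sum_near (K n L : nat) : (n < K)%nat -> (K <= L)%nat ->
  Cmod (average K n (fun t => csum (fun N => a N * Cpow t N)%C (S L))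
        - a n * RtoC (r ^ n) * RtoC (INR K))
  <= INR K * B * (q ^ K / (1 - q)).
Proof.
  intros HnK HKL; rewrite average_partial_sum.
  set (v := (a n * RtoC (r ^ n) * RtoC (INR K))%C).
  rewrite <- (csum_kronecker n (S L) v), <- csum_minus by lia.
  eapply Rle_trans; [apply Cmod_csum_le|].
  eapply Rle_trans; [apply (rsum_le _ (fun N => INR K * B * (if (K <=? N)%nat then q ^ N else 0)))|].
  - intros N _; destruct (K <=? N)%nat eqn:HKN; [apply Nat.leb_le in HKN | apply Nat.leb_nle in HKN].
    + replace (N =? n)%nat with false by (symmetry; apply Nat.eqb_neq; lia).
      replace (_ - 0)%C with (a N * RtoC (r ^ N) * root_sum K (K - n + N))%C by ring.
      rewrite !Cmod_mult, Cmod_RtoC_nonneg by (apply pow_le; lra).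
      pose proof (Cmod_root_sum_le K (K - n + N)); pose proof (a_dominated N).
      assert (0 <= Cmod (a N) * r ^ N) by (apply Rmult_le_pos; [apply Cmod_ge_0 | apply pow_le; lra]).
      assert (0 <= INR K) by apply pos_INR.
      replace (INR K * B * q ^ N) with (B * q ^ N * INR K) by ring.
      apply Rmult_le_compat; auto using Cmod_ge_0.
    + destruct (Nat.eq_dec N n) as [->|HNn].
      * rewrite Nat.eqb_refl; replace (K - n + n)%nat with K by lia.
        rewrite root_sum_self by lia.
        assert (Hv0 : (a n * RtoC (r ^ n) * RtoC (INR K) - v)%C = 0%C) by (unfold v; ring).
        rewrite Hv0, Cmod_0; lra.
      * replace (N =? n)%nat with false by (symmetry; apply Nat.eqb_neq; lia).
        rewrite root_sum_eq0 by lia.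
        assert (H0 : (a N * RtoC (r ^ N) * 0 - 0)%C = 0%C) by ring.
        rewrite H0, Cmod_0; lra.
  - rewrite rsum_mult_l; apply Rmult_le_compat_l.
    + apply Rmult_le_pos; [apply pos_INR | apply dominating_constant_ge0].
    + apply rsum_geometric_tail_le, q_bound.
Qed.

Lemma Cmod_average_le (K n : nat) : Cmod (average K n f) <= INR K * m.
Proof.
  unfold average; eapply Rle_trans; [apply Cmod_csum_le|].
  rewrite <- rsum_const; apply rsum_le; intros u _.
  rewrite Cmod_mult, Cmod_Cpow_zeta, Rmult_1_l; apply f_bound, Cmod_node.
Qed.

Lemma cauchy_estimate_approx (K n : nat) : (n < K)%nat ->
  Cmod (a n) * r ^ n <= m + B * (q ^ K / (1 - q)).
Proof.
  intros HnK.
  set (v := (a n * RtoC (r ^ n) * RtoC (INR K))%C).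
  assert (Hlim : filterlim (fun L => average K n (fun t => csum (fun N => a N * Cpow t N)%C (S L)))
                   eventually (locally (average K n f))).
  { apply filterlim_csum; intros u _; apply filterlim_Cmult_l, f_lim, Cmod_node. }
  assert (Hnear : Cmod (average K n f - v) <= INR K * B * (q ^ K / (1 - q))).
  { apply (Cmod_lim_le _ _ _ _ Hlim); exists K; intros L HL; apply average_partial_sum_near; lia. }
  assert (Hv : Cmod v <= INR K * m + INR K * B * (q ^ K / (1 - q))).
  { pose proof (Cmod_average_le K n) as Havg.
    pose proof (Cmod_triangle (average K n f) (- (average K n f - v))) as Htri.
    rewrite Cmod_opp in Htri.
    replace (average K n f + - (average K n f - v))%C with v in Htri by ring.
    lra. }
  assert (HK : 0 < INR K) by (apply lt_0_INR; lia).
  unfold v in Hv; rewrite !Cmod_mult, !Cmod_RtoC_nonneg in Hv by (apply pow_le || apply pos_INR; lra).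
  apply Rmult_le_reg_r with (INR K); [exact HK | nra].
Qed.

Theorem cauchy_estimate (n : nat) : Cmod (a n) * r ^ n <= m.
Proof.
  apply Rle_plus_epsilon; intros eps Heps.
  pose proof dominating_constant_ge0 as HB.
  assert (Hgap : 0 < eps * (1 - q) / (B + 1))
    by (apply Rdiv_lt_0_compat; [apply Rmult_lt_0_compat|]; lra).
  destruct (pow_lt_1_zero q ltac:(rewrite Rabs_pos_eq; lra) _ Hgap) as [K0 HK0].
  set (K := Nat.max K0 (S n)).
  specialize (HK0 K ltac:(lia)); rewrite Rabs_pos_eq in HK0 by (apply pow_le; lra).
  pose proof (cauchy_estimate_approx K n ltac:(lia)).
  assert (B * (q ^ K / (1 - q)) <= eps).
  { unfold Rdiv; rewrite <- Rmult_assoc; apply Rmult_le_reg_r with (1 - q); [lra|].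
    rewrite Rmult_assoc, Rinv_l, Rmult_1_r by lra.
    apply Rmult_lt_compat_l with (r := B + 1) in HK0; [|lra].
    replace ((B + 1) * (eps * (1 - q) / (B + 1))) with (eps * (1 - q)) in HK0 by (field; lra).
    pose proof (pow_le q K ltac:(lra)); nra. }
  lra.
Qed.

End CauchyEstimate.

Lemma Cmod_hpart_le (c : nat -> nat -> C) (p : C * C -> C) (Rad m0 : R) (N : nat) (x y : C) :
  0 < Rad -> is_power_series_on Rad c p ->
  (forall z, in_bidisc Rad z -> Cmod (p z) <= m0) ->
  Cmod x <= Rad / 2 -> Cmod y <= Rad / 2 -> Cmod (hpart c N x y) <= m0.
Proof.
  intros HRad Hps Hp Hx Hy.
  set (lam := RtoC (3 / 2)).
  assert (Hlam : Cmod lam = 3 / 2) by (apply Cmod_RtoC_nonneg; lra).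
  destruct (Hps (lam * x, lam * y)%C) as [[B HB] _].
  { split; simpl; rewrite Cmod_mult, Hlam; lra. }
  assert (Hdom : forall N, Cmod (hpart c N x y) * 1 ^ N <= B * (2 / 3) ^ N).
  { intros N'; specialize (HB N'); simpl in HB.
    pose proof (Cmod_hpart_le_abssum2 c N' (lam * x) (lam * y)) as Hle.
    rewrite hpart_scale, Cmod_mult, Cmod_Cpow, Hlam in Hle.
    rewrite pow1, Rmult_1_r.
    assert (Hinv : (3 / 2) ^ N' * (2 / 3) ^ N' = 1).
    { rewrite <- Rpow_mult_distr; replace (3 / 2 * (2 / 3)) with 1 by field; apply pow1. }
    replace (Cmod (hpart c N' x y)) with (Cmod (hpart c N' x y) * (3 / 2) ^ N' * (2 / 3) ^ N')
      by (rewrite Rmult_assoc, Hinv; ring).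
    apply Rmult_le_compat_r; [apply pow_le |]; lra. }
  assert (Hcauchy : Cmod (hpart c N x y) * 1 ^ N <= m0).
  { apply (cauchy_estimate (fun N => hpart c N x y) (fun t => p (t * x, t * y)%C) 1 (2 / 3) B m0);
      [lra | lra | exact Hdom | |].
    - intros t Ht.
      assert (Hin : in_bidisc Rad (t * x, t * y)%C) by (split; simpl; rewrite Cmod_mult, Ht; lra).
      eapply filterlim_ext; [|exact (proj2 (Hps _ Hin))]; intros L; cbn [fst snd].
      rewrite psum2_hpart; apply csum_ext; intros N' _; rewrite hpart_scale; ring.
    - intros t Ht; apply Hp; split; simpl; rewrite Cmod_mult, Ht; lra. }
  rewrite pow1, Rmult_1_r in Hcauchy; exact Hcauchy.
Qed.

Lemma Cmod_hpart_le_scaled (c : nat -> nat -> C) (p : C * C -> C) (Rad m0 rho : R) (N : nat)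
  (x y : C) :
  0 < Rad -> is_power_series_on Rad c p ->
  (forall z, in_bidisc Rad z -> Cmod (p z) <= m0) ->
  0 < rho -> Cmod x <= rho -> Cmod y <= rho ->
  Cmod (hpart c N x y) <= m0 * (2 * rho / Rad) ^ N.
Proof.
  intros HRad Hps Hp Hrho Hx Hy.
  set (Q := 2 * rho / Rad).
  assert (HQ : 0 < Q) by (apply Rdiv_lt_0_compat; lra).
  assert (HQC : RtoC Q <> 0%C) by (apply RtoC_neq0; lra).
  assert (HQm : Cmod (RtoC Q) = Q) by (apply Cmod_RtoC_nonneg; lra).
  assert (Hshrink : forall w, Cmod w <= rho -> Cmod (w / RtoC Q) <= Rad / 2).
  { intros w Hw; rewrite Cmod_div, HQm by exact HQC.
    apply Rmult_le_reg_r with Q; [exact HQ|].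
    unfold Rdiv; rewrite Rmult_assoc, Rinv_l by lra; unfold Q; field_simplify; lra. }
  replace x with (RtoC Q * (x / RtoC Q))%C by (field; exact HQC).
  replace y with (RtoC Q * (y / RtoC Q))%C by (field; exact HQC).
  rewrite hpart_scale, Cmod_mult, Cmod_Cpow, HQm, Rmult_comm.
  apply Rmult_le_compat_r; [apply pow_le; lra|].
  apply (Cmod_hpart_le c p Rad m0 N _ _ HRad Hps Hp); apply Hshrink; assumption.
Qed.

Lemma Cmod_power_series_le (c : nat -> nat -> C) (p : C * C -> C) (Rad m0 rho : R) (M : nat)
  (z : C * C) :
  0 < Rad -> order_at_least M c -> is_power_series_on Rad c p ->
  (forall w, in_bidisc Rad w -> Cmod (p w) <= m0) ->
  0 < rho <= Rad / 4 -> in_bidisc rho z ->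
  Cmod (p z) <= 2 * m0 * (2 * rho / Rad) ^ M.
Proof.
  intros HRad Hc Hps Hp Hrho [Hx Hy].
  set (Q := 2 * rho / Rad).
  assert (HQ : 0 < Q <= 1 / 2).
  { unfold Q; split; [apply Rdiv_lt_0_compat; lra|].
    apply Rmult_le_reg_r with Rad; [lra|]; unfold Rdiv; rewrite Rmult_assoc, Rinv_l; lra. }
  assert (HzRad : in_bidisc Rad z) by (split; lra).
  assert (Hm0 : 0 <= m0) by (pose proof (Cmod_ge_0 (p z)); specialize (Hp z HzRad); lra).
  destruct z as [xi eta]; simpl in Hx, Hy.
  assert (Hterm : forall N, Cmod (hpart c N xi eta) <= m0 * (if (M <=? N)%nat then Q ^ N else 0)).
  { intros N; destruct (M <=? N)%nat eqn:HMN.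
    - apply (Cmod_hpart_le_scaled c p Rad m0 rho); auto; lra.
    - apply Nat.leb_nle in HMN; rewrite (hpart_low c M) by (assumption || lia).
      rewrite Cmod_0; lra. }
  assert (Hsub0 : forall w : C, (w - 0)%C = w) by (intros; ring).
  assert (Hpartial : forall L, Cmod (psum2 c L xi eta - 0) <= 2 * m0 * Q ^ M).
  { intros L; rewrite Hsub0, psum2_hpart.
    eapply Rle_trans; [apply Cmod_csum_le|].
    eapply Rle_trans; [apply rsum_le; intros k _; apply Hterm|].
    rewrite rsum_mult_l.
    pose proof (rsum_geometric_tail_le Q M (S L) ltac:(lra)).
    assert (Q ^ M / (1 - Q) <= 2 * Q ^ M).
    { apply Rmult_le_reg_r with (1 - Q); [lra|].
      unfold Rdiv; rewrite Rmult_assoc, Rinv_l by lra.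
      pose proof (pow_lt Q M ltac:(lra)); nra. }
    nra. }
  rewrite <- (Hsub0 (p (xi, eta))); apply (Cmod_lim_le _ _ _ _ (proj2 (Hps _ HzRad))).
  exists 0%nat; intros L _; apply Hpartial.
Qed.

Lemma schwarz_bound_le (s : nat) (Rad m0 d : R) :
  0 < Rad -> 0 < m0 -> 0 < d -> d <= Rad ^ (2 * s + 1) / (2 ^ (6 * s + 6) * m0) ->
  2 * m0 * (2 * (4 * d) / Rad) ^ (2 * s + 1) <= d ^ (2 * s) / 4.
Proof.
  intros HRad Hm0 Hd Hdb.
  set (M := (2 * s + 1)%nat) in *.
  assert (H2 : 2 ^ (6 * s + 6) = 8 * 8 ^ M).
  { unfold M; replace (6 * s + 6)%nat with (3 * (2 * s + 1 + 1))%nat by lia.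
    rewrite pow_mult, pow_add; replace (2 ^ 3) with 8 by ring; ring. }
  assert (HRM : 0 < Rad ^ M) by (apply pow_lt; lra).
  assert (H8M : 0 < 8 ^ M) by (apply pow_lt; lra).
  assert (Hds : 0 < d ^ (2 * s)) by (apply pow_lt; lra).
  assert (Hkey : d * (8 * 8 ^ M * m0) <= Rad ^ M).
  { rewrite H2 in Hdb; apply Rmult_le_compat_r with (r := 8 * 8 ^ M * m0) in Hdb; [|nra].
    replace (Rad ^ M / (8 * 8 ^ M * m0) * (8 * 8 ^ M * m0)) with (Rad ^ M) in Hdb by (field; nra).
    exact Hdb. }
  replace (2 * m0 * (2 * (4 * d) / Rad) ^ M)
    with (d ^ (2 * s) * (d * (8 * 8 ^ M * m0)) / (4 * Rad ^ M)).
  - apply Rle_trans with (d ^ (2 * s) * Rad ^ M / (4 * Rad ^ M)); [|right; field; lra].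
    apply Rmult_le_compat_r; [left; apply Rinv_0_lt_compat; lra|].
    apply Rmult_le_compat_l; lra.
  - assert (HdM : d ^ M = d ^ (2 * s) * d) by (unfold M; rewrite pow_add, pow_1; ring).
    replace (2 * (4 * d) / Rad) with (8 * d / Rad) by (field; lra).
    unfold Rdiv; rewrite !Rpow_mult_distr, pow_inv, HdM; field; lra.
Qed.

(** * Orbits of phi *)

Lemma exp_le (x y : R) : x <= y -> exp x <= exp y.
Proof. intros [Hlt | ->]; [left; apply exp_increasing, Hlt | right; reflexivity]. Qed.

Lemma Cmod_cexp (z : C) : Cmod (cexp z) = exp (Re z).
Proof.
  unfold cexp, Cmod; simpl fst; simpl snd.
  pose proof (sin2_cos2 (Im z)) as Hsc; unfold Rsqr in Hsc; pose proof (exp_pos (Re z)).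
  replace ((exp (Re z) * cos (Im z)) ^ 2 + (exp (Re z) * sin (Im z)) ^ 2) with (exp (Re z) ^ 2)
    by nra.
  apply sqrt_pow2; lra.
Qed.

Lemma cexp_mul_cexp_opp (z : C) : (cexp z * cexp (- z) = 1)%C.
Proof.
  unfold cexp, Re, Im; simpl; rewrite cos_neg, sin_neg.
  pose proof (exp_plus (fst z) (- fst z)) as Hexp.
  replace (fst z + - fst z) with 0 in Hexp by ring; rewrite exp_0 in Hexp.
  pose proof (sin2_cos2 (snd z)) as Hsc; unfold Rsqr in Hsc.
  apply injective_projections; simpl; [|ring].
  transitivity (exp (fst z) * exp (- fst z) * (sin (snd z) * sin (snd z) + cos (snd z) * cos (snd z)));
    [ring | rewrite <- Hexp, Hsc; ring].
Qed.

Lemma Cmod_cexp_Ci_omega_le (alpha : R) (s : nat) (t : C) :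
  Cmod (cexp (Ci * omega alpha s t)) <= exp (Cmod t ^ s) /\
  Cmod (cexp (- (Ci * omega alpha s t))) <= exp (Cmod t ^ s).
Proof.
  assert (HIm : Rabs (Im (omega alpha s t)) <= Cmod t ^ s).
  { rewrite <- Cmod_Cpow; eapply Rle_trans; [|apply Rmax_Cmod].
    unfold omega, Im; simpl; rewrite Rplus_0_l; apply Rmax_r. }
  assert (Hre : Re (Ci * omega alpha s t) = - Im (omega alpha s t)) by (unfold Re, Im; simpl; ring).
  assert (Hre' : Re (- (Ci * omega alpha s t)) = Im (omega alpha s t)) by (unfold Re, Im; simpl; ring).
  rewrite !Cmod_cexp, Hre, Hre'.
  pose proof (Rle_abs (Im (omega alpha s t))); pose proof (Rle_abs (- Im (omega alpha s t))).
  rewrite Rabs_Ropp in *.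
  split; apply exp_le; lra.
Qed.

Lemma phi_step (alpha : R) (s : nat) (p : C * C -> C) (z : C * C) (e delta : R) :
  0 <= delta < 1 -> Cmod (p z) <= delta -> Cmod (fst z * snd z) ^ s <= e ->
  Cmod (fst (phi alpha s p z)) <= exp e / (1 - delta) * Cmod (fst z) /\
  Cmod (snd (phi alpha s p z)) <= exp e / (1 - delta) * Cmod (snd z) /\
  (fst (phi alpha s p z) * snd (phi alpha s p z) = fst z * snd z)%C.
Proof.
  intros Hdelta Hp He; destruct z as [xi eta]; simpl fst in *; simpl snd in *.
  unfold phi; simpl fst; simpl snd.
  set (w := omega alpha s (xi * eta)%C).
  destruct (Cmod_cexp_Ci_omega_le alpha s (xi * eta)%C) as [Hplus Hminus]; fold w in Hplus, Hminus.
  apply exp_le in He.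
  pose proof (Cmod_ge_0 xi); pose proof (Cmod_ge_0 eta).
  assert (Hlow : 1 - delta <= Cmod (1 + p (xi, eta))).
  { pose proof (Cmod_triangle (1 + p (xi, eta)) (- p (xi, eta))) as Htri.
    rewrite Cmod_opp in Htri.
    replace (1 + p (xi, eta) + - p (xi, eta))%C with (RtoC 1) in Htri by ring.
    rewrite Cmod_1 in Htri; lra. }
  assert (Hup : Cmod (1 + p (xi, eta)) <= 1 / (1 - delta)).
  { pose proof (Cmod_triangle 1 (p (xi, eta))) as Htri; rewrite Cmod_1 in Htri.
    apply Rle_trans with (1 + delta); [lra|].
    apply Rmult_le_reg_r with (1 - delta); [lra|]; field_simplify; nra. }
  assert (Hnz : (1 + p (xi, eta))%C <> 0%C) by (apply Cplus_1_neq0; lra).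
  pose proof (exp_pos e).
  split; [|split].
  - rewrite !Cmod_mult.
    replace (exp e / (1 - delta) * Cmod xi) with (exp e * Cmod xi * (1 / (1 - delta))) by (field; lra).
    apply Rmult_le_compat; [apply Rmult_le_pos; [apply Cmod_ge_0|lra] | apply Cmod_ge_0 | |exact Hup].
    apply Rmult_le_compat_r; lra.
  - rewrite !Cmod_mult, Cmod_inv by exact Hnz.
    replace (exp e / (1 - delta) * Cmod eta) with (exp e * Cmod eta * / (1 - delta)) by (field; lra).
    apply Rmult_le_compat; [apply Rmult_le_pos; [apply Cmod_ge_0|lra] | |
                            apply Rmult_le_compat_r; lra | apply Rinv_le_contravar; lra].
    left; apply Rinv_0_lt_compat; lra.
  - transitivity ((cexp (Ci * w) * cexp (- (Ci * w))) * (xi * eta)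
                  * ((1 + p (xi, eta)) / (1 + p (xi, eta))))%C; [field; exact Hnz|].
    rewrite cexp_mul_cexp_opp; field; exact Hnz.
Qed.

Lemma iter_phi_in_bidisc (alpha : R) (s : nat) (p : C * C -> C) (rho e delta : R) (n : nat)
  (z : C * C) :
  0 <= delta < 1 -> (forall w, in_bidisc rho w -> Cmod (p w) <= delta) ->
  Cmod (fst z * snd z) ^ s <= e ->
  (exp e / (1 - delta)) ^ n * Cmod (fst z) < rho ->
  (exp e / (1 - delta)) ^ n * Cmod (snd z) < rho ->
  forall j, (j <= n)%nat -> in_bidisc rho (Nat.iter j (phi alpha s p) z).
Proof.
  intros Hdelta Hp He Hx Hy.
  set (g := exp e / (1 - delta)) in *.
  assert (Hg : 1 <= g).
  { assert (0 <= e) by (eapply Rle_trans; [apply pow_le, Cmod_ge_0 | exact He]).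
    unfold g; apply Rmult_le_reg_r with (1 - delta); [lra|].
    unfold Rdiv; rewrite Rmult_assoc, Rinv_l by lra.
    pose proof (exp_ineq1_le e); lra. }
  assert (Hbidisc : forall j, (j <= n)%nat ->
            Cmod (fst (Nat.iter j (phi alpha s p) z)) <= g ^ j * Cmod (fst z) ->
            Cmod (snd (Nat.iter j (phi alpha s p) z)) <= g ^ j * Cmod (snd z) ->
            in_bidisc rho (Nat.iter j (phi alpha s p) z)).
  { intros j Hj H1 H2; pose proof (Rle_pow g j n Hg Hj).
    pose proof (Cmod_ge_0 (fst z)); pose proof (Cmod_ge_0 (snd z)); split; nra. }
  assert (Hinv : forall j, (j <= n)%nat ->
            Cmod (fst (Nat.iter j (phi alpha s p) z)) <= g ^ j * Cmod (fst z) /\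
            Cmod (snd (Nat.iter j (phi alpha s p) z)) <= g ^ j * Cmod (snd z) /\
            (fst (Nat.iter j (phi alpha s p) z) * snd (Nat.iter j (phi alpha s p) z)
             = fst z * snd z)%C).
  { induction j as [|j IH]; intros Hj; [simpl; repeat split; lra|].
    destruct (IH ltac:(lia)) as (Hfst & Hsnd & Hprod).
    pose proof (Hp _ (Hbidisc j ltac:(lia) Hfst Hsnd)) as Hpj.
    rewrite <- Hprod in He.
    destruct (phi_step alpha s p _ e delta Hdelta Hpj He) as (Sfst & Ssnd & Sprod).
    assert (0 <= g) by lra.
    simpl Nat.iter; rewrite Sprod; split; [|split; [|exact Hprod]].
    - eapply Rle_trans; [exact Sfst|].
      simpl pow; rewrite Rmult_assoc; apply Rmult_le_compat_l; assumption.
    - eapply Rle_trans; [exact Ssnd|].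
      simpl pow; rewrite Rmult_assoc; apply Rmult_le_compat_l; assumption. }
  intros j Hj; destruct (Hinv j Hj) as (Hfst & Hsnd & _); exact (Hbidisc j Hj Hfst Hsnd).
Qed.

Lemma inv_one_minus_le_exp (x : R) : 0 <= x <= 1 / 2 -> / (1 - x) <= exp (2 * x).
Proof.
  intros Hx; pose proof (exp_ineq1_le (2 * x)).
  apply Rmult_le_reg_r with (1 - x); [lra|]; rewrite Rinv_l by lra; nra.
Qed.

Lemma exp_pow (a : R) (n : nat) : exp a ^ n = exp (INR n * a).
Proof.
  induction n as [|n IH]; [simpl; rewrite Rmult_0_l, exp_0; reflexivity|].
  rewrite S_INR; simpl pow; rewrite IH, <- exp_plus; f_equal; ring.
Qed.

Lemma growth_pow_le (e delta : R) (n : nat) :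
  0 <= delta <= 1 / 2 -> (exp e / (1 - delta)) ^ n <= exp (INR n * (e + 2 * delta)).
Proof.
  intros Hdelta; rewrite <- exp_pow, exp_plus.
  apply pow_incr; split.
  - apply Rdiv_le_0_compat; [left; apply exp_pos | lra].
  - apply Rmult_le_compat_l; [left; apply exp_pos | apply inv_one_minus_le_exp; lra].
Qed.

Lemma d0_bounds (s : nat) (Rad m0 : R) (n : nat) :
  (1 <= s)%nat -> 0 < Rad -> 0 < m0 -> (1 <= n)%nat ->
  0 < d0 s Rad m0 n /\
  d0 s Rad m0 n <= Rad ^ (2 * s + 1) / (2 ^ (6 * s + 6) * m0) /\
  INR n * d0 s Rad m0 n ^ (2 * s) <= 1 / 2 /\
  d0 s Rad m0 n <= Rad / 16.
Proof.
  intros Hs HRad Hm0 Hn.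
  assert (Hn0 : 0 < INR n) by (apply lt_0_INR; lia).
  assert (Hs0 : 0 < INR s) by (apply lt_0_INR; lia).
  set (P := Rpower (/ (2 * INR n)) (/ (2 * INR s))).
  assert (HP : 0 < P) by apply exp_pos.
  unfold d0; fold P.
  set (d := Rmin (Rmin (Rad ^ (2 * s + 1) / (2 ^ (6 * s + 6) * m0)) P) (Rad / 16)).
  assert (Hd1 : d <= Rad ^ (2 * s + 1) / (2 ^ (6 * s + 6) * m0))
    by (eapply Rle_trans; [apply Rmin_l | apply Rmin_l]).
  assert (Hd2 : d <= P) by (eapply Rle_trans; [apply Rmin_l | apply Rmin_r]).
  assert (Hd : 0 < d).
  { apply Rmin_glb_lt; [apply Rmin_glb_lt|]; try lra.
    apply Rdiv_lt_0_compat; [apply pow_lt; lra | apply Rmult_lt_0_compat; [apply pow_lt|]; lra]. }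
  assert (HPs : P ^ (2 * s) = / (2 * INR n)).
  { unfold P; rewrite <- Rpower_pow, Rpower_mult, mult_INR by exact HP.
    replace (/ (2 * INR s) * (INR 2 * INR s)) with 1 by (simpl; field; lra).
    apply Rpower_1, Rinv_0_lt_compat; lra. }
  repeat split; [exact Hd | exact Hd1 | | apply Rmin_r].
  apply Rle_trans with (INR n * P ^ (2 * s)).
  - apply Rmult_le_compat_l; [lra | apply pow_incr; lra].
  - rewrite HPs; right; field; lra.
Qed.

Theorem lemma3p1 (s : nat) (alpha Rad m0 : R) (c : nat -> nat -> C)
  (p : C * C -> C) (n : nat) :
  (1 <= s)%nat -> 0 < Rad -> Rad < 1 -> 0 < m0 ->
  order_at_least (2 * s + 1) c ->
  is_power_series_on Rad c p ->
  (forall z, in_bidisc Rad z -> Cmod (p z) <= m0) ->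
  (1 <= n)%nat ->
  forall k : nat, (1 <= k <= n)%nat ->
  forall z : C * C, in_bidisc (d0 s Rad m0 n) z ->
    (forall j : nat, (j < k)%nat ->
       phi_defined_at Rad p (Nat.iter j (phi alpha s p) z)) /\
    in_bidisc (4 * d0 s Rad m0 n) (Nat.iter k (phi alpha s p) z).
Proof.
  intros Hs HRad _ Hm0 Hc Hps Hp Hn k Hk z [Hx Hy].
  destruct (d0_bounds s Rad m0 n Hs HRad Hm0 Hn) as (Hd & Hd_m0 & Hd_n & Hd_Rad).
  set (d := d0 s Rad m0 n) in *.
  set (e := d ^ (2 * s)) in *.
  assert (He : 0 <= e) by (apply pow_le; lra).
  assert (Hn1 : 1 <= INR n) by (apply (le_INR 1); exact Hn).
  assert (Hp_small : forall w, in_bidisc (4 * d) w -> Cmod (p w) <= e / 4).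
  { intros w Hw; eapply Rle_trans;
      [exact (Cmod_power_series_le c p Rad m0 (4 * d) (2 * s + 1) w HRad Hc Hps Hp ltac:(lra) Hw)|].
    apply schwarz_bound_le; assumption. }
  assert (Hgrowth : (exp e / (1 - e / 4)) ^ n <= 4).
  { eapply Rle_trans; [apply growth_pow_le; nra|].
    apply Rle_trans with (exp 1); [apply exp_le; nra | pose proof exp_le_3; lra]. }
  assert (Horbit : forall j, (j <= n)%nat -> in_bidisc (4 * d) (Nat.iter j (phi alpha s p) z)).
  { pose proof (Cmod_ge_0 (fst z)); pose proof (Cmod_ge_0 (snd z)).
    apply (iter_phi_in_bidisc alpha s p (4 * d) e (e / 4)); [nra | exact Hp_small | | nra | nra].
    unfold e; rewrite pow_mult, Cmod_mult; apply pow_incr; split; [apply Rmult_le_pos|simpl]; nra. }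
  split.
  - intros j Hj; destruct (Horbit j ltac:(lia)) as [Hxj Hyj]; split; [split; lra|].
    apply Cplus_1_neq0; eapply Rle_lt_trans; [apply Hp_small; split; assumption | nra].
  - apply Horbit; lia.
Qed.
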